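(* Let $u_1,\ldots,u_6\in\mathbb{R}^3$ be arbitrary vectors and define $v_{i+1}=[u_i,u_{i+1}]$ for $i=1,\ldots,6$ (indices mod $6$, so $v_1=[u_6,u_1]$). Let $\Delta_i=(v_i,[v_{i+1},v_{i+2}])$ for $i=1,\ldots,6$ (indices mod $6$). Then $\Delta_1\Delta_3\Delta_5=\Delta_2\Delta_4\Delta_6$.
   Context: $(a,b)$ denotes the dot product and $[a,b]$ the cross product in $\mathbb{R}^3$; $(a,[b,c])=\det(a,b,c)$. *)

From mathcomp Require Import all_boot all_order all_algebra.
From mathcomp Require Import reals.
Set Implicit Arguments. Unset Strict Implicit. Unset Printing Implicit Defensive.
Import GRing.Theory Num.Theory.
Local Open Scope ring_scope.

Definition dotp (R : realType) (a b : 'rV[R]_3) : R :=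
  \sum_(i < 3) a 0 i * b 0 i.

Definition crossp (R : realType) (a b : 'rV[R]_3) : 'rV[R]_3 :=
  \row_(k < 3)
    (if k == 0 :> nat then a 0 1 * b 0 2 - a 0 2 * b 0 1
     else if k == 1 :> nat then a 0 2 * b 0 0 - a 0 0 * b 0 2
     else a 0 0 * b 0 1 - a 0 1 * b 0 0).

(* Indices mod 6: we use 0-based indices 'I_6, with i -> i+1 mod 6. *)
Definition succ6 (i : 'I_6) : 'I_6 := ordS i.

From mathcomp Require Import all_boot all_order all_algebra.
From mathcomp Require Import reals.
From mathcomp Require Import ring.
Import GRing.Theory.
Local Open Scope ring_scope.

(* Writing t_i = (u_{i-1}, [u_i, u_{i+1}]), the identity
   ([a,b], [[b,c],[c,d]]) = (a,[b,c]) (b,[c,d]) gives Delta_i = t_i t_{i+1};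
   hence both sides equal t_1 t_2 ... t_6. *)

Definition triple {R : realType} (a b c : 'rV[R]_3) : R := dotp a (crossp b c).

Lemma dotpE (R : realType) (a b : 'rV[R]_3) :
  dotp a b = a 0 0 * b 0 0 + a 0 1 * b 0 1 + a 0 2 * b 0 2.
Proof.
rewrite /dotp !big_ord_recr big_ord0 /= add0r.
by congr (_ * _ + _ * _ + _ * _); congr (_ 0 _); apply/val_inj.
Qed.

Lemma triple_crossp (R : realType) (a b c d : 'rV[R]_3) :
  triple (crossp a b) (crossp b c) (crossp c d) = triple a b c * triple b c d.
Proof. by rewrite /triple !dotpE /crossp !mxE /=; ring. Qed.

Lemma ordS_inord (n k : nat) : (k <= n)%N ->
  ordS (inord k : 'I_n.+1) = inord (k.+1 %% n.+1).
Proof. by move=> le_kn; apply/val_inj; rewrite /= inordK // inordK ?ltn_pmod. Qed.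

Theorem mainTheorem5 (R : realType) (u : 'I_6 -> 'rV[R]_3) :
  let v : 'I_6 -> 'rV[R]_3 := fun j => crossp (u (ord_pred j)) (u j) in
  let Delta : 'I_6 -> R := fun i => dotp (v i) (crossp (v (succ6 i)) (v (succ6 (succ6 i)))) in
  Delta (inord 0) * Delta (inord 2) * Delta (inord 4)
  = Delta (inord 1) * Delta (inord 3) * Delta (inord 5).
Proof.
move=> v Delta.
pose t i := triple (u (ord_pred i)) (u i) (u (succ6 i)).
have Delta_t i : Delta i = t i * t (succ6 i).
  by rewrite /Delta /v /succ6 !ordSK -[LHS]/(triple _ _ _) triple_crossp /t ordSK.
rewrite !Delta_t /succ6 !ordS_inord //=.
ring.
Qed.
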